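(* Let $(X,L)$ be an exact cobordism with good ends, with positive end $(Y,\Lambda)$, and assume that the $(-\infty)$-boundary of $L$ is empty and $L$ is connected. Let $\epsilon$ be the augmentation of the contact homology algebra $\mathcal{A}(Y,\Lambda)$ induced by $L$. Then the natural map $Q'(\Lambda)\to \mathbf{V}(X,L)$, which sends a formal sum of covectors $c^*$ dual to Reeb chords $c$ (an element of $Q'(\Lambda)$) to the corresponding formal sum of Reeb chords $c$ in $\mathbf{V}(X,L)$, is a chain map (with respect to the dual of $\partial^\epsilon_1$ and $d^f$). Furthermore, if $(X,L)$ satisfies a monotonicity condition, i.e. there are constants $C_0$ and $C_1>0$ such that $|c|>C_1\mathfrak{a}(c)+C_0$ for every Reeb chord $c$ of $\Lambda$, then the induced map on homology \[ LCH^{*}(Y,\Lambda;\epsilon)\to E^{*}_{1}(X,L) \] is an isomorphism.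
   Context: Setting. $Y$ is a contact $(2n-1)$-manifold with contact form $\lambda$; a Reeb chord of a Legendrian $\Lambda\subset Y$ is a trajectory of the Reeb vector field of $\lambda$ starting and ending on $\Lambda$; its action is $\mathfrak{a}(c)=\int_c\lambda$. An exact cobordism $(X,L)$: $X$ is an exact symplectic $2n$-manifold which outside a compact set is symplectomorphic to $Y^+\times[0,\infty)\sqcup Y^-\times(-\infty,0]$ with symplectic forms $d(e^t\lambda^\pm)$, and $L\subset X$ is an exact Lagrangian submanifold which outside a compact set equals $\Lambda^+\times[0,\infty)\sqcup\Lambda^-\times(-\infty,0]$ for Legendrians $\Lambda^\pm\subset Y^\pm$. Standing assumptions: $X$ is simply connected, $c_1(TX)=0$, the Maslov class of $L$ vanishes, $\Lambda^+$ is generic w.r.t. the Reeb flow, and the ends are good (every moduli space of holomorphic spheres in $X$, resp. in $Y^-\times\mathbb{R}$, with positive puncture at a Reeb orbit of $Y^+$, resp. $Y^-$, has formal dimension $\ge 2$). A generic almost complex structure $J$ compatible with the symplectic form and adjusted (translation invariant, pairing Reeb field with $\partial_t$) in the ends is fixed. Coefficients are $\mathbb{Z}_2$; $|\mathcal{M}|$ denotes the mod 2 count of a compact $0$-manifold. Here $\Lambda^-=\emptyset$, $(Y,\Lambda)=(Y^+,\Lambda^+)$. For a Reeb chord $c$ of $\Lambda$, $\mathcal{M}(c)$ is the moduli space of $J$-holomorphic disks in $X$ with boundary on $L$ and one positive boundary puncture asymptotic to the strip over $c$; the grading is $|c|=\dim\mathcal{M}(c)$ (formal dimension; well defined by the standing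 assumptions). For chords $a,b_1,\dots,b_k$, $\mathcal{M}(a;b_1\dots b_k)$ is the moduli space of holomorphic disks in $Y\times\mathbb{R}$ with boundary on $\Lambda\times\mathbb{R}$, positive puncture at $a$, negative punctures at $b_1,\dots,b_k$ in boundary order; it has dimension $|a|-\sum|b_j|$, and $\widehat{\mathcal{M}}=\mathcal{M}/\mathbb{R}$. Contact homology: $\mathcal{A}(Y,\Lambda)$ is the unital algebra over $\mathbb{Z}_2$ generated by Reeb chords, with differential $\partial c=\sum_{\dim\mathcal{M}(c;\bar b)=1}|\widehat{\mathcal{M}}(c;\bar b)|\,\bar b$ extended by Leibniz rule. The augmentation induced by $L$ is the algebra map $\epsilon:\mathcal{A}(Y,\Lambda)\to\mathbb{Z}_2$, $\epsilon(c)=|\mathcal{M}(c)|$ if $\dim\mathcal{M}(c)=0$ and $0$ otherwise; it satisfies $\epsilon\circ\partial=0$. With $E_\epsilon(c)=c+\epsilon(c)$, $\partial^\epsilon=E_\epsilon\partial E_\epsilon^{-1}$ preserves the word-length filtration; its induced map on $Q(\Lambda)=\mathcal{A}_1/\mathcal{A}_2$ (the vector space with basis the Reeb chords) is $\partial^\epsilon_1$, with homology $LCH_*(Y,\Lambda;\epsilon)$. $Q'(\Lambda)=\mathrm{Hom}(Q(\Lambda),\mathbb{Z}_2)$ with the dual differential; its homology is $LCH^*(Y,\Lambda;\epsilon)$. Rational SFT in this case: $\mathbf{V}(X,L)$ is the $\mathbb{Z}$-graded $\mathbb{Z}_2$-vector space of formal sums of Reeb chords of $\Lambda$ containing only finitely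 many chords of action below any given number, graded by $|c|$. The differential is $d^f(c)=\sum_a\sum_{\dim\mathcal{M}(a;\bar b\,c\,\bar e)=1}|\widehat{\mathcal{M}}(a;\bar b\,c\,\bar e)|\,\epsilon(\bar b)\epsilon(\bar e)\,a$ (attach $c$ to a negative puncture of a rigid symplectization disk and cap the other negative punctures with rigid disks in $X$); it has degree $1$ and increases action. For $\alpha>0$, $\mathbf{V}_{[\alpha]}(X,L)$ is the quotient of $\mathbf{V}(X,L)$ by the subcomplex of sums of chords of action $\ge\alpha$, with induced differential $d^f_\alpha$, and $E_1^*(X,L)=\varprojlim_\alpha \ker d^f_\alpha/\mathrm{im}\,d^f_\alpha$. *)

(* Algebraic abstraction of the Legendrian contact homology /
   rational SFT data of an exact cobordism (X,L) with empty negative end. *)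
From HB Require Import structures.
From mathcomp Require Import all_boot all_order all_algebra.
Set Implicit Arguments. Unset Strict Implicit. Unset Printing Implicit Defensive.
Import Order.TTheory GRing.Theory Num.Theory.
Local Open Scope ring_scope.

Section Defs.
Variable Chord : eqType.

(* Elements of the algebra A(Y,Lambda) over Z_2 are represented by formal sums
   of words (seq (seq Chord)); the coefficient of a word is its multiplicity
   mod 2.  The empty word is the unit 1. *)
Definition word := seq Chord.
Definition fsum := seq word.

(* del a = the list of words b_1...b_k with |M^(a; b_1...b_k)| = 1 mod 2,
   dim M(a;b) = 1 (repeated entries are counted mod 2). *)
Variable del : Chord -> fsum.
Variable eps : Chord -> bool.

(* Leibniz extension of the differential to a word (char 2: no signs);
   the unit (empty word) is a cycle. *)
Fixpoint dword (w : word) : fsum :=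
  match w with
  | [::] => [::]
  | c :: w' => [seq u ++ w' | u <- del c] ++ [seq c :: u | u <- dword w']
  end.
Definition dsum (s : fsum) : fsum := flatten (map dword s).

Definition eps_word (w : word) : bool := all eps w.

(* The algebra map E_eps (c |-> c + eps(c)) on a word, then on a formal sum. *)
Fixpoint Eword (w : word) : fsum :=
  match w with
  | [::] => [:: [::]]
  | c :: w' => let r := Eword w' in [seq c :: u | u <- r] ++ (if eps c then r else [::])
  end.
Definition Esum (s : fsum) : fsum := flatten (map Eword s).
(* E_eps^{-1}: the algebra map c |-> c - eps(c) = c + eps(c) over Z_2. *)
Definition Einvsum (s : fsum) : fsum := Esum s.

Definition deps (c : Chord) : fsum := Esum (dsum (Einvsum [:: [:: c]])).

(* Q'(Lambda) = Hom(Q(Lambda), Z_2): arbitrary functions Chord -> bool.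
   Evaluation of x on the word-length-one part of a formal sum. *)
Definition eval1 (x : Chord -> bool) (s : fsum) : bool :=
  odd (count (fun u => if u is [:: c] then x c else false) s).
(* the dual of partial^eps_1 : (delta x)(a) = x(partial^eps_1 a) *)
Definition dual_diff (x : Chord -> bool) (a : Chord) : bool := eval1 x (deps a).

Fixpoint splits (w : word) : seq (word * Chord * word) :=
  match w with
  | [::] => [::]
  | c :: w' => ([::], c, w') :: [seq (c :: t.1.1, t.1.2, t.2) | t <- splits w']
  end.

Definition df (x : Chord -> bool) (a : Chord) : bool :=
  odd (count (fun t => [&& eps_word t.1.1, x t.1.2 & eps_word t.2])
             (flatten (map splits (del a)))).

Variable R : realFieldType.
Variable gr : Chord -> int.
Variable act : Chord -> R.

Definition homog (k : int) (x : Chord -> bool) := forall c, x c -> gr c = k.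

Definition inV (x : Chord -> bool) :=
  forall alpha : R, exists s : seq Chord, forall c, x c -> act c < alpha -> c \in s.

(* elements of V_[alpha] represented by sums of chords of action < alpha *)
Definition below (alpha : R) (x : Chord -> bool) := forall c, x c -> act c < alpha.

Definition closedQ (x : Chord -> bool) := forall a, dual_diff x a = false.
Definition exactQ (k : int) (x : Chord -> bool) :=
  exists z, homog (k - 1) z /\ forall a, dual_diff z a = x a.

(* cycles / boundaries in V_[alpha] = V / (sums of chords of action >= alpha),
   tested on representatives; equality is compared below alpha *)
Definition closedV (alpha : R) (x : Chord -> bool) :=
  forall a, act a < alpha -> df x a = false.
Definition exactV (alpha : R) (k : int) (x : Chord -> bool) :=
  exists y, [/\ homog (k - 1) y, below alpha y &
                forall a, act a < alpha -> df y a = x a].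

Definition chord_data_axioms :=
  [/\ (forall c, 0 < act c),
      (* Lambda generic: finitely many chords of action below any number *)
      (forall alpha : R, exists s : seq Chord, forall c, act c < alpha -> c \in s),
      (* dim M(a; w) = |a| - sum |w_j| = 1 *)
      (forall a w, w \in del a -> \sum_(c <- w) gr c = gr a - 1),
      (* positivity of energy: action decreases along symplectization disks *)
      (forall a w, w \in del a -> \sum_(c <- w) act c < act a) &
      (* partial o partial = 0 *)
      (forall a u, ~~ odd (count_mem u (dsum (del a))))].

Definition augmentation_axioms :=
  (* eps(c) = |M(c)| only if dim M(c) = 0, and eps o partial = 0 *)
  (forall c, eps c -> gr c = 0) /\ (forall a, ~~ odd (count eps_word (del a))).

End Defs.

From HB Require Import structures.
From mathcomp Require Import all_boot all_order all_algebra.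
Import Order.TTheory GRing.Theory Num.Theory.
Set Implicit Arguments. Unset Strict Implicit. Unset Printing Implicit Defensive.

(* Over Z_2, the linear part of partial^eps(a) = E_eps partial(a)
      counts, for every word b_1...b_n of partial(a), the ways of keeping one
      letter b_i and replacing all others by eps(b_j).  This is exactly the
      count defining d^f(x)(a), so d^f = (partial^eps_1)^* on the nose
      (lemma [df_dual_diff]); the image of x lies in V(X,L) because Lambda has
      finitely many chords below any action.
   2. Grading.  A rigid disk of dim 1 with capped negative ends raises the
      grading by one, so d^f of a degree-j element lives in degree j+1
      ([df_degree]).
   3. Action bound.  Monotonicity |c| > C1 a(c) + C0 bounds the action of all
      chords of degree <= k+1 by a single constant A ([action_bound]).  Above
      level A, truncation V -> V_[alpha] loses nothing in degrees k-1, k, k+1,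
      so the inverse system E_1^k is constant from alpha = A on and the
      comparison map is an isomorphism in degree k ([Stable] section). *)

Section ChainMap.
Variable Chord : eqType.
Variable eps : Chord -> bool.
Variable x : Chord -> bool.

Definition linear_weight (u : seq Chord) : bool :=
  if u is [:: c] then x c else false.

Definition split_weight (t : seq Chord * Chord * seq Chord) : bool :=
  [&& eps_word eps t.1.1, x t.1.2 & eps_word eps t.2].

Lemma count_Eword_nil (w : seq Chord) :
  count (pred1 [::]) (Eword eps w) = eps_word eps w.
Proof.
elim: w => [|c w IH] //=.
rewrite count_cat count_map (@eq_count _ _ pred0) ?count_pred0 //=.
by case: (eps c) => //=; rewrite IH addn0.
Qed.

Lemma count_Eword_linear (w : seq Chord) :
  count linear_weight (Eword eps w) = count split_weight (splits w).
Proof.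
elim: w => [|c w IH] //=.
rewrite count_cat !count_map /split_weight /=.
have -> : count (preim (cons c) linear_weight) (Eword eps w) = x c && eps_word eps w.
  case xc: (x c) => /=.
  - by rewrite -count_Eword_nil; apply: eq_count => -[|? ?] //=; rewrite /linear_weight xc.
  - by rewrite (@eq_count _ _ pred0) ?count_pred0 // => -[|? ?] //=; rewrite /linear_weight xc.
rewrite /eps_word; case ec: (eps c); congr (_ + _).
- by rewrite IH; apply: eq_count => t; rewrite /split_weight /= ec.
- by rewrite [RHS](@eq_count _ _ pred0) ?count_pred0 // => t /=; rewrite ec.
Qed.
End ChainMap.

Lemma df_dual_diff (Chord : eqType) (del : Chord -> seq (seq Chord))
    (eps x : Chord -> bool) (a : Chord) :
  df del eps x a = dual_diff del eps x a.
Proof.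
rewrite /df /dual_diff /eval1 /deps /Einvsum /Esum /dsum /=.
have del_cats0 : [seq u ++ [::] | u <- del a] = del a.
  by rewrite (eq_map (@cats0 _)) map_id.
case: (eps a); rewrite /= !cats0 del_cats0 !count_flatten -!map_comp;
  congr (odd (sumn _)); apply: eq_map => w /=; symmetry; exact: count_Eword_linear.
Qed.

Lemma splitsP (Chord : eqType) (w : seq Chord) t :
  t \in splits w -> w = t.1.1 ++ t.1.2 :: t.2.
Proof.
elim: w t => [|c w IH] t //=; rewrite inE => /orP [/eqP -> //|/mapP [t' /IH -> ->] //].
Qed.

Local Open Scope ring_scope.

Lemma df_degree (Chord : eqType) (gr : Chord -> int)
    (del : Chord -> seq (seq Chord)) (eps y : Chord -> bool) (j : int) (a : Chord) :
  (forall a w, w \in del a -> \sum_(c <- w) gr c = gr a - 1) ->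
  (forall c, eps c -> gr c = 0) ->
  homog gr j y -> df del eps y a -> gr a = j + 1.
Proof.
move=> del_dim eps_dim y_j; rewrite /df => dfa.
have /hasP [t /flattenP [_ /mapP [w w_del ->] t_w] /and3P [epsb yc epse]] :
  has (split_weight eps y) (flatten [seq splits i | i <- del a]).
  by rewrite has_count; case: count dfa.
have capped0 b : eps_word eps b -> \sum_(c <- b) gr c = 0.
  by move=> /allP eps_b; apply: big1_seq => c /andP [_ /eps_b /eps_dim].
have := del_dim a w w_del; rewrite (splitsP t_w) big_cat big_cons /=.
by rewrite (capped0 _ epsb) (capped0 _ epse) add0r addr0 (y_j _ yc) => ->; rewrite subrK.
Qed.

Lemma action_bound (R : realFieldType) (Chord : Type) (gr : Chord -> int)
    (act : Chord -> R) (C0 C1 : R) :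
  0 < C1 -> (forall c, C1 * act c + C0 < (gr c)%:~R) ->
  forall n : int, exists2 A : R, 0 < A & forall c, gr c <= n -> act c < A.
Proof.
move=> C1_gt0 mono n; exists (Num.max 1 ((n%:~R - C0) / C1)); first by rewrite lt_max ltr01.
move=> c c_n; rewrite lt_max; apply/orP; right.
have act_lt : act c < ((gr c)%:~R - C0) / C1.
  by rewrite ltr_pdivlMr // ltrBrDl mulrC addrC.
apply: (lt_le_trans act_lt); apply: ler_wpM2r; first by rewrite invr_ge0 ltW.
by rewrite lerD2r ler_int.
Qed.

Lemma exactV_ext (R : realFieldType) (Chord : eqType) (gr : Chord -> int)
    (act : Chord -> R) (del : Chord -> seq (seq Chord)) (eps : Chord -> bool)
    (alpha : R) (j : int) (z z' : Chord -> bool) :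
  (forall a, act a < alpha -> z a = z' a) ->
  exactV del eps gr act alpha j z -> exactV del eps gr act alpha j z'.
Proof.
move=> zz' [y [y_deg y_below y_d]]; exists y; split=> // a a_lt.
by rewrite y_d // zz'.
Qed.

Section Stable.
Variables (R : realFieldType) (Chord : eqType) (gr : Chord -> int) (act : Chord -> R).
Variables (del : Chord -> seq (seq Chord)) (eps : Chord -> bool).
Hypothesis del_dim : forall a w, w \in del a -> \sum_(c <- w) gr c = gr a - 1.
Hypothesis eps_dim : forall c, eps c -> gr c = 0.
Variables (k : int) (A : R).
Hypothesis low_degree_bounded : forall c, gr c <= k + 1 -> act c < A.

Let le_pred_k : k - 1 <= k. Proof. by rewrite gerBl. Qed.
Let le_k_succ : k <= k + 1. Proof. by rewrite lerDl. Qed.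

Lemma homog_below (j : int) (x : Chord -> bool) :
  homog gr j x -> j <= k + 1 -> below act A x.
Proof. by move=> x_j j_le c /x_j c_j; apply: low_degree_bounded; rewrite c_j. Qed.

Lemma df_vanishes_above (j : int) (y : Chord -> bool) (a : Chord) :
  homog gr j y -> j <= k -> ~~ (act a < A) -> df del eps y a = false.
Proof.
move=> y_j j_le a_ge; apply/negbTE; apply: contra a_ge.
move=> /(df_degree del_dim eps_dim y_j) a_deg.
by apply: low_degree_bounded; rewrite a_deg lerD2r.
Qed.

Lemma closedQ_of_closedV (x : Chord -> bool) :
  homog gr k x -> closedV del eps act A x -> closedQ del eps x.
Proof.
move=> x_k x_closed a; rewrite -df_dual_diff.
have [a_lt | a_ge] := boolP (act a < A); first exact: x_closed.
exact: df_vanishes_above x_k (lexx k) a_ge.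
Qed.

Lemma exactQ_of_exactV (x : Chord -> bool) :
  homog gr k x -> exactV del eps gr act A k (fun c => x c && (act c < A)) ->
  exactQ del eps gr k x.
Proof.
move=> x_k [y [y_deg _ y_d]]; exists y; split=> // a; rewrite -df_dual_diff.
have [a_lt | a_ge] := boolP (act a < A); first by rewrite y_d // a_lt andbT.
have -> : x a = false.
  by apply/negbTE; apply: contra a_ge => /(homog_below x_k le_k_succ).
exact: df_vanishes_above y_deg le_pred_k a_ge.
Qed.

Lemma exactV_raise (beta : R) (z : Chord -> bool) :
  A <= beta -> below act A z ->
  exactV del eps gr act A k z -> exactV del eps gr act beta k z.
Proof.
move=> A_le z_below [y [y_deg y_below y_d]]; exists y; split=> //.
  by move=> c /y_below /lt_le_trans; apply.
move=> a _; have [a_lt | a_ge] := boolP (act a < A); first exact: y_d.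
have -> : z a = false by apply/negbTE; apply: contra a_ge => /z_below.
exact: df_vanishes_above y_deg le_pred_k a_ge.
Qed.

Lemma comparison_raise (xA xb : Chord -> bool) (beta : R) :
  A <= beta -> homog gr k xb -> below act A xA ->
  exactV del eps gr act A k (fun c => (xb c && (act c < A)) (+) xA c) ->
  exactV del eps gr act beta k (fun c => (xA c && (act c < beta)) (+) xb c).
Proof.
move=> A_le xb_k xA_below exact_A.
have xb_below := homog_below xb_k le_k_succ.
have diff_below : below act A (fun c => (xb c && (act c < A)) (+) xA c).
  move=> c; case xAc: (xA c); first by move=> _; exact: xA_below.
  by rewrite addbF => /andP [].
apply: exactV_ext (exactV_raise A_le diff_below exact_A) => a _.
have -> : xb a && (act a < A) = xb a by case xba: (xb a) => //=; exact: xb_below xba.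
have -> : xA a && (act a < beta) = xA a.
  by case xAa: (xA a) => //=; exact: lt_le_trans (xA_below _ xAa) A_le.
exact: addbC.
Qed.
End Stable.

Theorem theorem1p1 (R : realFieldType) (Chord : eqType)
    (gr : Chord -> int) (act : Chord -> R)
    (del : Chord -> seq (seq Chord)) (eps : Chord -> bool) :
  chord_data_axioms del gr act ->
  augmentation_axioms del eps gr ->
  (* the natural map Q'(Lambda) -> V(X,L), x |-> x, lands in V and is a chain map *)
  (forall x : Chord -> bool,
      inV act x /\ forall a, df del eps x a = dual_diff del eps x a) /\
  (* under monotonicity, LCH^k -> E_1^k is an isomorphism for every degree k *)
  (forall C0 C1 : R, 0 < C1 ->
     (forall c, C1 * act c + C0 < (gr c)%:~R) ->
     forall k : int,
       (* injectivity *)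
       (forall x, homog gr k x -> closedQ del eps x ->
          (forall alpha : R, 0 < alpha ->
             exactV del eps gr act alpha k (fun c => x c && (act c < alpha))) ->
          exactQ del eps gr k x) /\
       (* surjectivity onto the inverse limit *)
       (forall xs : R -> Chord -> bool,
          (forall alpha, 0 < alpha ->
             [/\ homog gr k (xs alpha), below act alpha (xs alpha) &
                 closedV del eps act alpha (xs alpha)]) ->
          (forall alpha beta, 0 < alpha -> alpha <= beta ->
             exactV del eps gr act alpha k
               (fun c => (xs beta c && (act c < alpha)) (+) xs alpha c)) ->
          exists x, [/\ homog gr k x, closedQ del eps x &
            forall alpha, 0 < alpha ->
              exactV del eps gr act alpha k
                (fun c => (x c && (act c < alpha)) (+) xs alpha c)])).
Proof.
move=> [_ finite_below del_dim _ _] [eps_dim _]; split.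
  move=> x; split; last exact: df_dual_diff.
  by move=> alpha; have [s s_all] := finite_below alpha; exists s => c _ /s_all.
move=> C0 C1 C1_gt0 mono k.
have [A A_gt0 bounded] := action_bound C1_gt0 mono (k + 1).
(* injectivity: a class dying at level A already dies in Q'(Lambda) *)
split=> [x x_k _ x_exact | xs xs_cycle xs_compat].
  exact: (exactQ_of_exactV del_dim eps_dim bounded x_k (x_exact A A_gt0)).
(* surjectivity: the level-A component of the inverse system is the preimage *)
have [xA_k xA_below xA_closed] := xs_cycle A A_gt0.
exists (xs A); split=> //.
  exact: (closedQ_of_closedV del_dim eps_dim bounded xA_k xA_closed).
move=> alpha alpha_gt0; have [alpha_le | A_lt] := lerP alpha A; first exact: xs_compat.
have [xalpha_k _ _] := xs_cycle alpha alpha_gt0.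
exact: (comparison_raise del_dim eps_dim bounded (ltW A_lt) xalpha_k xA_below
  (xs_compat A alpha A_gt0 (ltW A_lt))).
Qed.
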